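(* Let $\mathcal{X}$ be an $n$-premaniplex and $(\mathcal{Y},\eta)$ an $(n,m)$-voltage operator. Let $\tau\in\operatorname{Aut}(\mathcal{Y})$ be such that there exists a group homomorphism $\tau_\#:\operatorname{Mon}(\mathcal{X})\to\operatorname{Mon}(\mathcal{X})$ with $\tau_\#(\overline{\eta(W)})=\overline{\eta(W\tau)}$ for every $W\in\Pi(\mathcal{Y})$, and suppose $\mathcal{X}$ is isomorphic to $\mathcal{X}_{\tau_\#}$. Then $\tau$ lifts to $\mathcal{X}\rtimes_\eta\mathcal{Y}$.
   Context: An $n$-premaniplex is an edge-coloured graph (semi-edges and parallel edges allowed) with colours $\{0,\dots,n-1\}$ such that every vertex (flag) is the start of exactly one dart of each colour, and for $|i-j|\ge2$ alternating $i,j$-paths of length 4 are closed; $x^i$ is the $i$-adjacent flag of $x$. $\mathcal{C}^n=\langle r_0,\dots,r_{n-1}\mid r_i^2,\ (r_ir_j)^2\ (|i-j|\ge2)\rangle$ acts on the left on flags by $r_ix=x^i$; the monodromy group $\operatorname{Mon}(\mathcal{X})$ is the permutation group on flags induced by this action, and $\bar\omega\in\operatorname{Mon}(\mathcal{X})$ denotes the image of $\omega\in\mathcal{C}^n$. $\mathcal{X}_{\tau_\#}$ is the edge-coloured graph with the flags of $\mathcal{X}$ in which the $i$-adjacent flag of $x$ is $\tau_\#(\bar r_i)x$. Isomorphisms are bijections on flags preserving all adjacencies; automorphisms act on the right and map paths to paths, $W\mapsto W\tau$. For a flag $y$ of an $m$-premaniplex $\mathcal{Y}$ and $\omega\in\mathcal{C}^m$,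 $W_\omega(y)$ is the homotopy class of paths from $y$ whose colour sequence $i_1,\dots,i_k$ satisfies $r_{i_k}\cdots r_{i_1}=\omega$; these form the fundamental groupoid $\Pi(\mathcal{Y})$. A voltage assignment $\eta:\Pi(\mathcal{Y})\to\mathcal{C}^n$ satisfies $\eta(W_1W_2)=\eta(W_2)\eta(W_1)$; $(\mathcal{Y},\eta)$ is an $(n,m)$-voltage operator. $\mathcal{X}\rtimes_\eta\mathcal{Y}$ has flags $\mathcal{X}\times\mathcal{Y}$ and $(x,y)^i=(\eta(W_{r_i}(y))x,r_iy)$, $i\in\{0,\dots,m-1\}$. $\tau$ lifts to $\mathcal{X}\rtimes_\eta\mathcal{Y}$ if there is $\tilde\tau\in\operatorname{Aut}(\mathcal{X}\rtimes_\eta\mathcal{Y})$ such that the $\mathcal{Y}$-coordinate of $(x,y)\tilde\tau$ is $y\tau$ for all $(x,y)$. *)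

From mathcomp Require Import all_boot.

Set Implicit Arguments.
Unset Strict Implicit.
Unset Printing Implicit Defensive.

Definition far (n : nat) (i j : 'I_n) : bool := (i.+1 < j) || (j.+1 < i).

(* An n-premaniplex: a set of flags with, for each colour i, the
   i-adjacency map x |-> x^i (semi-edges = fixed points, parallel edges
   allowed).  "exactly one dart of each colour" = adj i is an involution;
   alternating i,j-paths of length 4 (|i-j|>=2) are closed. *)
Record premaniplex (n : nat) := Premaniplex {
  flag :> Type;
  adj : 'I_n -> flag -> flag;
  adjK : forall i x, adj i (adj i x) = x;
  adj_far : forall i j x, far i j -> adj i (adj j (adj i (adj j x))) = x
}.
Arguments adj {n} p i x.

(* Elements of C^n = <r_0..r_{n-1} | r_i^2, (r_i r_j)^2 (|i-j|>=2)> are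
   represented by words: [:: a1; ...; ak] stands for r_a1 r_a2 ... r_ak.
   cox_eq is the congruence generated by the defining relations, i.e.
   equality in C^n; the product of two elements is concatenation. *)
Inductive cox_eq (n : nat) : seq 'I_n -> seq 'I_n -> Prop :=
| cox_refl w : cox_eq w w
| cox_sym w w' : cox_eq w w' -> cox_eq w' w
| cox_trans w1 w2 w3 : cox_eq w1 w2 -> cox_eq w2 w3 -> cox_eq w1 w3
| cox_sq u v i : cox_eq (u ++ [:: i; i] ++ v) (u ++ v)
| cox_far u v i j : far i j -> cox_eq (u ++ [:: i; j; i; j] ++ v) (u ++ v).

(* Left action of C^n on flags: mon_act w x = r_a1 (r_a2 (... (r_ak x))).
   The map w |-> mon_act X w is omega |-> bar omega, onto Mon(X). *)
Definition mon_act (n : nat) (X : premaniplex n) (w : seq 'I_n) : X -> X :=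
  foldr (fun i f => adj X i \o f) id w.
Arguments mon_act {n} X w _.

Definition adj_iso (k : nat) (A B : Type) (ra : 'I_k -> A -> A)
  (rb : 'I_k -> B -> B) (f : A -> B) : Prop :=
  bijective f /\ forall i a, f (ra i a) = rb i (f a).

Definition is_aut (n : nat) (X : premaniplex n) (f : X -> X) : Prop :=
  adj_iso (adj X) (adj X) f.

(* Fundamental groupoid: the homotopy class W_omega(y) is represented by the
   pair (y, omega) with omega a word in C^m; it ends at omega y, and
   W_omega(y) W_psi(omega y) = W_(psi omega)(y).
   A voltage assignment eta : Pi(Y) -> C^n, eta y omega = eta(W_omega(y)),
   must be well defined on classes (C^m-equal words give C^n-equal values)
   and satisfy eta(W1 W2) = eta(W2) eta(W1). *)
Definition is_voltage (n m : nat) (Y : premaniplex m)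
  (eta : Y -> seq 'I_m -> seq 'I_n) : Prop :=
  (forall y w w', cox_eq w w' -> cox_eq (eta y w) (eta y w')) /\
  (forall y w1 w2,
     cox_eq (eta y (w2 ++ w1)) (eta (mon_act Y w1 y) w2 ++ eta y w1)).

(* X ⋊_eta Y: flags X * Y, (x,y)^i = (bar(eta(W_{r_i}(y))) x, r_i y). *)
Definition sdp_adj (n m : nat) (X : premaniplex n) (Y : premaniplex m)
  (eta : Y -> seq 'I_m -> seq 'I_n) (i : 'I_m) (p : X * Y) : X * Y :=
  (mon_act X (eta p.2 [:: i]) p.1, adj Y i p.2).

(* tsh : Mon(X) -> Mon(X) is a group homomorphism.  Elements of Mon(X) are
   the permutations mon_act X w; tsh is given as a map on functions X -> X,
   only its values on Mon(X) matter. *)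
Definition mon_hom (n : nat) (X : premaniplex n)
  (tsh : (X -> X) -> (X -> X)) : Prop :=
  (forall w, exists w', tsh (mon_act X w) = mon_act X w') /\
  (forall w1 w2,
     tsh (mon_act X (w1 ++ w2)) = tsh (mon_act X w1) \o tsh (mon_act X w2)).

(* Adjacency of X_{tau#}: the i-adjacent flag of x is tau#(bar r_i) x. *)
Definition twisted_adj (n : nat) (X : premaniplex n)
  (tsh : (X -> X) -> (X -> X)) (i : 'I_n) : X -> X :=
  tsh (mon_act X [:: i]).

Definition lifts (n m : nat) (X : premaniplex n) (Y : premaniplex m)
  (eta : Y -> seq 'I_m -> seq 'I_n) (tau : Y -> Y) : Prop :=
  exists tt : X * Y -> X * Y,
    adj_iso (sdp_adj eta) (sdp_adj eta) tt /\
    forall p, (tt p).2 = tau p.2.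

From mathcomp Require Import all_boot.

Set Implicit Arguments.
Unset Strict Implicit.
Unset Printing Implicit Defensive.

(* An isomorphism f from X onto X_{tau#} conjugates every monodromy bar w of X
   into tau#(bar w).  Hence (x, y) |-> (f x, tau y) maps the i-edge from (x, y)
   to (bar eta(W_{r_i}(y)) x, r_i y) onto the i-edge from (f x, tau y), because
   tau#(bar eta(W)) = bar eta(W tau) and tau commutes with r_i. *)

Section Monodromy.

Variables (n : nat) (X : premaniplex n).

Lemma mon_act_cat (w1 w2 : seq 'I_n) (x : X) :
  mon_act X (w1 ++ w2) x = mon_act X w1 (mon_act X w2 x).
Proof. by elim: w1 => [|i w1 IH] //=; rewrite IH. Qed.

Lemma mon_actK (w : seq 'I_n) : cancel (mon_act X w) (mon_act X (rev w)).
Proof.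
elim: w => [|i w IH] x //=.
by rewrite rev_cons -cats1 mon_act_cat /= adjK IH.
Qed.

Lemma mon_act_inj (w : seq 'I_n) : injective (mon_act X w).
Proof. exact: can_inj (mon_actK w). Qed.

Variable tsh : (X -> X) -> (X -> X).
Hypothesis tsh_hom : mon_hom tsh.

(* tsh maps the identity of Mon(X) to an idempotent element of Mon(X), and the
   only idempotent permutation is the identity. *)
Lemma mon_hom_id (x : X) : tsh (mon_act X [::]) x = x.
Proof.
have [tsh_mon tshM] := tsh_hom; have [w tsh1] := tsh_mon [::].
have idem := f_equal (fun g => g x) (tshM [::] [::]).
rewrite /= tsh1 in idem.
rewrite tsh1; apply/esym/(@mon_act_inj w); exact: idem.
Qed.

Lemma twisted_iso_mon_act (f : X -> X) :
  adj_iso (adj X) (twisted_adj tsh) f ->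
  forall w x, f (mon_act X w x) = tsh (mon_act X w) (f x).
Proof.
move=> [_ f_adj]; have [_ tshM] := tsh_hom.
elim=> [|i w IH] x; first by rewrite mon_hom_id.
by rewrite [LHS]f_adj IH /twisted_adj (tshM [:: i] w).
Qed.

End Monodromy.

Lemma sdp_adj_iso (n m : nat) (X : premaniplex n) (Y : premaniplex m)
  (eta : Y -> seq 'I_m -> seq 'I_n) (f : X -> X) (tau : Y -> Y) :
  bijective f -> is_aut tau ->
  (forall y i x,
     f (mon_act X (eta y [:: i]) x) = mon_act X (eta (tau y) [:: i]) (f x)) ->
  adj_iso (sdp_adj eta) (sdp_adj eta) (fun p => (f p.1, tau p.2)).
Proof.
move=> [f' fK f'K] [[tau' tauK tau'K] tau_adj] f_eta; split.
  by exists (fun p => (f' p.1, tau' p.2)) => [[x y]|[x y]] /=;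
    rewrite ?fK ?f'K ?tauK ?tau'K.
by move=> i [x y]; rewrite /sdp_adj /= tau_adj f_eta.
Qed.

Theorem theorem6p5 (n m : nat) (X : premaniplex n) (Y : premaniplex m)
  (eta : Y -> seq 'I_m -> seq 'I_n) (Heta : is_voltage eta)
  (tau : Y -> Y) (Htau : is_aut tau) :
  (exists tsh : (X -> X) -> (X -> X),
     [/\ mon_hom tsh,
         (forall (y : Y) (w : seq 'I_m),
            tsh (mon_act X (eta y w)) = mon_act X (eta (tau y) w)) &
         exists f : X -> X, adj_iso (adj X) (twisted_adj tsh) f]) ->
  lifts X eta tau.
Proof.
move=> [tsh [tsh_hom tsh_eta [f f_iso]]].
exists (fun p => (f p.1, tau p.2)); split=> //.
apply: sdp_adj_iso => //; first by case: f_iso.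
by move=> y i x; rewrite (twisted_iso_mon_act tsh_hom f_iso) tsh_eta.
Qed.
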